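(* Let $a_2,a_3$ be integers with $1<a_2<a_3$, $A=\{1,a_2,a_3\}$, and let $h$ be a positive integer with $X(h)\ge a_3$. Write $X(h)=(k+1)a_3+Y$ with integers $k$ and $0\le Y<a_3$. Then $Y<a_3-1$, $k\ge 0$, and there is an integer $p$ with $0\le p\le k$ such that $SG(A,h-k,p)$ is a stride generator; moreover $y=Y+1$ is a break of $SG(A,h-k,p)$ which is either canonical or has break order $>k+1$.
   Context: An integer $x$ has an $h$-representation if $x=c_3a_3+c_2a_2+c_1$ with integers $c_1,c_2,c_3\ge0$ and $c_1+c_2+c_3\le h$. $X(h)$ is one less than the smallest positive integer with no $h$-representation. For integers $n$ and $i\ge 0$, an integer $x$ has an $n$-generation of order $i$ if there are integers $c_1,c_2\ge 0$ with $x+ia_3=c_2a_2+c_1$ and $c_1+c_2\le n+i$. For integers $n$ and $p\ge0$, $SG(A,n,p)$ is a stride generator if: (A) every integer $0\le x<a_3$ has an $n$-generation of some order $\le p$; (B) at least one integer $0\le x<a_3$ has no $n$-generation of order $<p$; (C) at least one integer $0\le y<a_3$ has no $(n-1)$-generation of any order $\le p+1$. Any $0\le y<a_3$ satisfying (C) is called a break. A break $y$ is canonical if there is no integer $j\ge 0$ with $y+ja_3=c_2a_2+c_1$, $c_1,c_2\ge 0$, $c_1+c_2\le (n-1)+j$; otherwise its break order is the smallest such $j$. *)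

From Stdlib Require Import ZArith Lia.
Open Scope Z_scope.

Definition hrep (a2 a3 h x : Z) : Prop :=
  exists c1 c2 c3 : Z, 0 <= c1 /\ 0 <= c2 /\ 0 <= c3 /\
    x = c3 * a3 + c2 * a2 + c1 /\ c1 + c2 + c3 <= h.

Definition is_X (a2 a3 h X : Z) : Prop :=
  0 <= X /\ (forall m, 1 <= m <= X -> hrep a2 a3 h m) /\ ~ hrep a2 a3 h (X + 1).

Definition ngen (a2 a3 n i x : Z) : Prop :=
  exists c1 c2 : Z, 0 <= c1 /\ 0 <= c2 /\
    x + i * a3 = c2 * a2 + c1 /\ c1 + c2 <= n + i.

Definition is_break (a2 a3 n p y : Z) : Prop :=
  0 <= y < a3 /\ forall i, 0 <= i <= p + 1 -> ~ ngen a2 a3 (n - 1) i y.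

Definition stride_generator (a2 a3 n p : Z) : Prop :=
  0 <= p /\
  (forall x, 0 <= x < a3 -> exists i, 0 <= i <= p /\ ngen a2 a3 n i x) /\
  (exists x, 0 <= x < a3 /\ forall i, 0 <= i < p -> ~ ngen a2 a3 n i x) /\
  (exists y, is_break a2 a3 n p y).

Definition canonical_break (a2 a3 n y : Z) : Prop :=
  ~ exists j, 0 <= j /\ ngen a2 a3 (n - 1) j y.

Definition is_break_order (a2 a3 n y j : Z) : Prop :=
  0 <= j /\ ngen a2 a3 (n - 1) j y /\
  forall j', 0 <= j' < j -> ~ ngen a2 a3 (n - 1) j' y.

From Stdlib Require Import ZArith Lia Classical.
Open Scope Z_scope.

(* Shifting by [m] copies of [a3] translates between the two notions: a
   representation [x + m a3 = c3 a3 + c2 a2 + c1] with [c1 + c2 + c3 <= n + m]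
   is the same as an [n]-generation of [x] of order [m - c3].  Since
   [0, X(h)] is covered, every residue [0 <= x < a3] has an [(h-k)]-generation
   of order at most [k], and the least such bound is the stride [p].  Since
   [X(h) + 1 = (Y + 1) + (k + 1) a3] is not representable, [Y + 1] has no
   [(h-k-1)]-generation of order at most [k + 1].  Finally [Y = a3 - 1] is
   impossible, as [X(h) + 1] would then be the multiple [(k + 2) a3], which
   is representable by [a3]'s alone. *)

Lemma Z_least_witness (P : Z -> Prop) (q : Z) :
  0 <= q -> P q -> exists p, 0 <= p <= q /\ P p /\ forall r, 0 <= r < p -> ~ P r.
Proof.
  intros Hq Pq.
  refine (Z_lt_induction (fun q => 0 <= q -> P q ->
    exists p, 0 <= p <= q /\ P p /\ forall r, 0 <= r < p -> ~ P r) _ q Hq Hq Pq).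
  clear q Hq Pq; intros q IH Hq Pq.
  destruct (classic (exists r, 0 <= r < q /\ P r)) as [[r [Hr Pr]] | Hnone].
  - destruct (IH r Hr ltac:(lia) Pr) as [p [Hp [Pp Hleast]]].
    exists p; split; [lia | auto].
  - exists q; split; [lia | split; [exact Pq |]].
    intros r Hr Pr; apply Hnone; eauto.
Qed.

Section Representations.

Variables a2 a3 : Z.

Lemma hrep_mul_a3 (h c : Z) : 0 <= c <= h -> hrep a2 a3 h (c * a3).
Proof. intros; exists 0, 0, c; repeat split; lia. Qed.

Lemma hrep_le (h x : Z) : 1 <= a2 <= a3 -> hrep a2 a3 h x -> x <= h * a3.
Proof. intros Ha [c1 [c2 [c3 [? [? [? [-> ?]]]]]]]; nia. Qed.

Lemma is_X_hrep (h X m : Z) :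
  0 <= h -> is_X a2 a3 h X -> 0 <= m <= X -> hrep a2 a3 h m.
Proof.
  intros Hh [_ [Hcover _]] Hm.
  destruct (Z.eq_dec m 0) as [-> | Hm0].
  - apply (hrep_mul_a3 h 0); lia.
  - apply Hcover; lia.
Qed.

Lemma hrep_of_ngen (n m i x : Z) :
  0 <= i <= m -> ngen a2 a3 n i x -> hrep a2 a3 (n + m) (x + m * a3).
Proof.
  intros Hi [c1 [c2 [? [? [? ?]]]]].
  exists c1, c2, (m - i); repeat split; lia.
Qed.

Lemma ngen_of_hrep (h k x : Z) :
  0 <= a2 -> 0 < a3 -> 0 <= x < a3 -> hrep a2 a3 h (x + k * a3) ->
  exists i, 0 <= i <= k /\ ngen a2 a3 (h - k) i x.
Proof.
  intros Ha2 Ha3 Hx [c1 [c2 [c3 [? [? [? [? ?]]]]]]].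
  assert (c3 <= k) by nia.
  exists (k - c3); split; [lia |].
  exists c1, c2; repeat split; lia.
Qed.

Definition covers (n p : Z) : Prop :=
  forall x, 0 <= x < a3 -> exists i, 0 <= i <= p /\ ngen a2 a3 n i x.

Lemma is_X_covers (h X k : Z) :
  0 <= a2 -> 0 < a3 -> 0 <= h -> is_X a2 a3 h X -> 0 <= k -> (k + 1) * a3 <= X ->
  covers (h - k) k.
Proof.
  intros Ha2 Ha3 Hh HX Hk HkX x Hx.
  apply (ngen_of_hrep h k x); try lia.
  apply (is_X_hrep h X); [lia | exact HX | nia].
Qed.

Lemma is_X_succ_not_mul_a3 (h X c : Z) :
  1 <= a2 < a3 -> 0 <= h -> is_X a2 a3 h X -> 0 <= c -> X + 1 <> c * a3.
Proof.
  intros Ha Hh HX Hc HXc.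
  pose proof HX as [HX0 [_ Hgap]].
  assert (X <= h * a3).
  { apply (hrep_le h); [lia |].
    apply (is_X_hrep h X); [lia | exact HX | lia]. }
  apply Hgap; rewrite HXc.
  apply hrep_mul_a3; nia.
Qed.

Lemma stride_generator_of_least_cover (n p : Z) :
  0 < a3 -> 0 <= p -> covers n p -> (forall r, 0 <= r < p -> ~ covers n r) ->
  (exists y, is_break a2 a3 n p y) -> stride_generator a2 a3 n p.
Proof.
  intros Ha3 Hp Hcov Hleast Hbreak.
  repeat split; auto.
  destruct (Z.eq_dec p 0) as [-> | Hp0].
  - exists 0; split; [lia | intros; lia].
  - apply NNPP; intros Hall; apply (Hleast (p - 1)); [lia |].
    intros x Hx; apply NNPP; intros Hnone; apply Hall.
    exists x; split; [exact Hx |].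
    intros i Hi Hg; apply Hnone; exists i; split; [lia | exact Hg].
Qed.

Lemma canonical_break_or_break_order (n y : Z) :
  canonical_break a2 a3 n y \/ exists j, is_break_order a2 a3 n y j.
Proof.
  destruct (classic (exists j, 0 <= j /\ ngen a2 a3 (n - 1) j y))
    as [[j [Hj Hg]] | Hnone]; [right | left; exact Hnone].
  destruct (Z_least_witness (fun j => ngen a2 a3 (n - 1) j y) j Hj Hg)
    as [j0 [Hj0 [Hg0 Hleast]]].
  exists j0; repeat split; auto; lia.
Qed.

Lemma break_order_gt (n y m j : Z) :
  (forall i, 0 <= i <= m -> ~ ngen a2 a3 (n - 1) i y) ->
  is_break_order a2 a3 n y j -> m < j.
Proof.
  intros Hno [Hj [Hg _]].
  destruct (Z_le_gt_dec j m); [exfalso; exact (Hno j ltac:(lia) Hg) | lia].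
Qed.

End Representations.

Theorem lemma11 (a2 a3 h X k Y : Z) :
  1 < a2 -> a2 < a3 -> 1 <= h ->
  is_X a2 a3 h X -> X >= a3 ->
  X = (k + 1) * a3 + Y -> 0 <= Y < a3 ->
  Y < a3 - 1 /\ 0 <= k /\
  exists p, 0 <= p <= k /\
    stride_generator a2 a3 (h - k) p /\
    is_break a2 a3 (h - k) p (Y + 1) /\
    (canonical_break a2 a3 (h - k) (Y + 1) \/
     exists j, is_break_order a2 a3 (h - k) (Y + 1) j /\ j > k + 1).
Proof.
  intros H2 H23 Hh HX HXa HXk HY.
  pose proof HX as [_ [_ Hgap]].
  assert (Hk : 0 <= k) by nia.
  assert (HYlt : Y < a3 - 1).
  { destruct (Z.eq_dec Y (a3 - 1)) as [E | E]; [exfalso | lia].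
    apply (is_X_succ_not_mul_a3 a2 a3 h X (k + 2)); try exact HX; nia. }
  assert (Hno_gen : forall i, 0 <= i <= k + 1 -> ~ ngen a2 a3 (h - k - 1) i (Y + 1)).
  { intros i Hi Hg; apply Hgap.
    replace (X + 1) with (Y + 1 + (k + 1) * a3) by lia.
    replace h with (h - k - 1 + (k + 1)) by lia.
    exact (hrep_of_ngen a2 a3 _ _ _ _ Hi Hg). }
  assert (Hcov : covers a2 a3 (h - k) k) by (apply (is_X_covers a2 a3 h X); try exact HX; nia).
  destruct (Z_least_witness _ k Hk Hcov) as [p [Hp [Hcovp Hleast]]].
  assert (Hbreak : is_break a2 a3 (h - k) p (Y + 1))
    by (split; [lia | intros i Hi; apply Hno_gen; lia]).
  split; [exact HYlt | split; [exact Hk |]].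
  exists p; split; [exact Hp | split; [| split; [exact Hbreak |]]].
  - apply stride_generator_of_least_cover; eauto; lia.
  - destruct (canonical_break_or_break_order a2 a3 (h - k) (Y + 1))
      as [Hcan | [j Hj]]; [left; exact Hcan | right].
    exists j; split; [exact Hj |].
    exact (Z.lt_gt _ _ (break_order_gt a2 a3 _ _ _ _ Hno_gen Hj)).
Qed.
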